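(* Let $D\geq 1$, $\mathcal{C}=\{-1,1\}^D$, and let $\mathfrak{A}\subseteq 2^{[D]}$ be a collection of subsets of $[D]$. Let $\mathcal{F}(\mathfrak{A})$ be the class of Boolean functions $f:\mathcal{C}\to\{-1,1\}$ whose Fourier coefficients vanish outside $\mathfrak{A}$, i.e. $\hat f(S)=0$ for all $S\subseteq[D]$ with $S\notin\mathfrak{A}$, where $\hat f(S)=\mathbb{E}_{X\sim\mathrm{Unif}(\mathcal{C})}[f(X)\chi_S(X)]$ and $\chi_S(x)=\prod_{i\in S}x_i$. Then \[ \dim_E(\mathcal{F}(\mathfrak{A}))\leq|\mathfrak{A}|. \] In particular, when $\mathfrak{A}$ consists of sets of size at most $k$, $|\mathfrak{A}|\leq\binom{D}{0}+\binom{D}{1}+\cdots+\binom{D}{k}\leq(eD/k)^k$.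
   Context: For a class $\mathcal{F}$ of functions $\mathcal{C}\to\{-1,1\}$, a point $x\in\mathcal{C}$ is independent of a sequence $(x_j)_{j=1}^m$ with respect to $\mathcal{F}$ if there exist $f_1,f_2\in\mathcal{F}$ with $f_1(x_j)=f_2(x_j)$ for all $j\in[m]$ but $f_1(x)\neq f_2(x)$. The eluder dimension $\dim_E(\mathcal{F})$ is the largest $K$ such that there exist $x_1,\dots,x_K\in\mathcal{C}$ with each $x_i$ independent of $(x_j)_{j=1}^{i-1}$ with respect to $\mathcal{F}$. *)

From mathcomp Require Import all_boot all_order all_algebra.
From mathcomp Require Import all_classical all_reals all_analysis.
Set Implicit Arguments. Unset Strict Implicit. Unset Printing Implicit Defensive.
Import Order.TTheory GRing.Theory Num.Theory.
Local Open Scope ring_scope.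

(* The hypercube C = {-1,1}^D: a point is encoded by a bit vector, bit b
   standing for the coordinate value (-1)^b, i.e. true <-> -1, false <-> 1. *)
Definition cube (D : nat) := {ffun 'I_D -> bool}.

Definition coord (D : nat) (x : cube D) (i : 'I_D) : rat :=
  if x i then -1 else 1.

Definition chi (D : nat) (S : {set 'I_D}) (x : cube D) : rat :=
  \prod_(i in S) coord x i.

Definition fourier (D : nat) (f : cube D -> rat) (S : {set 'I_D}) : rat :=
  (\sum_(x : cube D) f x * chi S x) / (#|{: cube D}|)%:R.

Definition boolean_fun (D : nat) (f : cube D -> rat) : Prop :=
  forall x, f x = 1 \/ f x = -1.

Definition FA (D : nat) (A : {set {set 'I_D}}) (f : cube D -> rat) : Prop :=
  boolean_fun f /\ forall S : {set 'I_D}, S \notin A -> fourier f S = 0.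

Definition independent (T : eqType) (F : (T -> rat) -> Prop) (x : T) (s : seq T) :
  Prop :=
  exists f1 f2, F f1 /\ F f2 /\ (forall y, y \in s -> f1 y = f2 y)
                /\ f1 x <> f2 x.

Definition eluder_seq (T : eqType) (F : (T -> rat) -> Prop) (s : seq T) : Prop :=
  forall (i : nat) (x0 : T), (i < size s)%N -> independent F (nth x0 s i) (take i s).

(* For f1, f2 in F(A), Fourier inversion writes f1 - f2 as a combination of the
   |A| characters chi_S, S in A.  In an eluder sequence x_1, ..., x_K, the
   difference witnessing the independence of x_j vanishes at x_1, ..., x_(j-1)
   but not at x_j, so the K x K matrix of these differences evaluated at the
   x_i is triangular with nonzero diagonal; it factors through the K x |A|
   matrix (chi_S(x_i)), hence K <= |A|.  For the counting bound, x = k/D gives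
   x^k * sum_(i<=k) C(D,i) <= (1 + x)^D <= e^(xD) = e^k. *)

From Pilot Require Import Defs.
From mathcomp Require Import all_boot all_order all_algebra.
From mathcomp Require Import all_classical all_reals all_analysis.

Set Implicit Arguments. Unset Strict Implicit. Unset Printing Implicit Defensive.
Import Order.TTheory GRing.Theory Num.Theory.
Local Open Scope ring_scope.

Lemma sum_subsets_prod (R : comPzSemiRingType) (I : finType) (a : I -> R) :
  \sum_(S : {set I}) \prod_(i in S) a i = \prod_(i : I) (1 + a i).
Proof.
have -> : \prod_(i : I) (1 + a i) = \prod_(i : I) \sum_(b : bool) (if b then a i else 1).
  by apply: eq_bigr => i _; rewrite big_bool addrC.
rewrite bigA_distr_bigA (reindex (fun f : {ffun I -> bool} => [set i | f i])) /=.
  apply: eq_bigr => f _; rewrite [RHS](bigID f) /= [X in _ * X]big1 ?mulr1.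
    by apply: congr_big => // i; rewrite inE // => ->.
  by move=> i /negbTE ->.
exists (fun S : {set I} => [ffun i => i \in S]) => [f _|S _].
  by apply/ffunP => i; rewrite ffunE inE.
by apply/setP => i; rewrite inE ffunE.
Qed.

Section TriangularFamily.
Variables (T : Type) (F : fieldType) (I : finType) (h : I -> T -> F) (A : {set I}).

Lemma trig_family_card_leq (K : nat) (g : 'I_K -> T -> F) (c : 'I_K -> I -> F)
    (x : 'I_K -> T) :
  (forall j t, g j t = \sum_(k in A) c j k * h k t) ->
  (forall i j : 'I_K, (i < j)%N -> g j (x i) = 0) ->
  (forall i, g i (x i) != 0) ->
  (K <= #|A|)%N.
Proof.
move=> g_span g_trig g_diag.
pose M := \matrix_(i < K, j < K) g j (x i).
pose E := \matrix_(i < K, k < #|A|) h (enum_val k) (x i).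
pose C := \matrix_(k < #|A|, j < K) c j (enum_val k).
have M_factor : M = E *m C.
  apply/matrixP => i j; rewrite !mxE g_span big_enum_val.
  by apply: eq_bigr => k _; rewrite !mxE mulrC.
have M_unit : M \in unitmx.
  rewrite unitmxE unitfE det_trig; last by apply/is_trig_mxP => i j ij; rewrite mxE g_trig.
  by apply/prodf_neq0 => i _; rewrite mxE.
have := mxrank_unit M_unit; rewrite M_factor => <-.
exact: leq_trans (mxrankM_maxl _ _) (rank_leq_col _).
Qed.

End TriangularFamily.

Lemma eluder_seq_size_leq (T : eqType) (Fc : (T -> rat) -> Prop) (I : finType)
    (h : I -> T -> rat) (A : {set I}) :
  (forall f1 f2, Fc f1 -> Fc f2 ->
     exists c : I -> rat, forall t, f1 t - f2 t = \sum_(k in A) c k * h k t) ->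
  forall s, eluder_seq Fc s -> (size s <= #|A|)%N.
Proof.
move=> Fc_span [//|y s']; set s := y :: s' => s_eluder.
have witness (j : 'I_(size s)) : exists gc : (T -> rat) * (I -> rat),
    [/\ forall t, gc.1 t = \sum_(k in A) gc.2 k * h k t,
        forall i : 'I_(size s), (i < j)%N -> gc.1 (nth y s i) = 0
      & gc.1 (nth y s j) != 0].
  have [f1 [f2 [Ff1 [Ff2 [agree differ]]]]] := s_eluder j y (ltn_ord j).
  have [c span] := Fc_span f1 f2 Ff1 Ff2.
  exists (fun t => f1 t - f2 t, c); split => //= [i ij|]; last by rewrite subr_eq0; apply/eqP.
  apply/eqP; rewrite subr_eq0; apply/eqP/agree.
  by rewrite -(nth_take y ij) mem_nth // size_take ltn_ord.
have [gc /all_and3 [span trig diag]] := fin_all_exists witness.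
apply: (@trig_family_card_leq _ _ _ h A _ (fun j => (gc j).1) (fun j => (gc j).2)
  (fun i => nth y s i) span _ diag).
by move=> i j; apply: trig.
Qed.

Section FourierAnalysis.
Variable D : nat.
Implicit Types (x y : cube D) (S : {set 'I_D}) (f : cube D -> rat).

Lemma card_cube : #|{: cube D}| = (2 ^ D)%N.
Proof. by rewrite card_ffun card_bool card_ord. Qed.

Lemma coordM x y i : Defs.coord x i * Defs.coord y i = if x i == y i then 1 else -1.
Proof. by rewrite /Defs.coord; case: (x i); case: (y i); rewrite ?mulrNN ?mulr1 ?mulrN ?mulNr. Qed.

Lemma sum_chiM x y : \sum_S chi S x * chi S y = if x == y then 2 ^+ D else 0.
Proof.
under eq_bigr => S _ do rewrite /chi -big_split /=.
rewrite sum_subsets_prod; have [<-|xy] := eqVneq x y.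
  rewrite -[in RHS](card_ord D) -prodr_const.
  by apply: eq_bigr => i _; rewrite coordM eqxx.
have [i xy_i] : exists i, x i != y i.
  apply/existsP; apply: contraNT xy; rewrite negb_exists => /forallP same.
  by apply/eqP/ffunP => i; apply/eqP/negPn/same.
by rewrite (bigD1 i) //= coordM (negbTE xy_i) subrr mul0r.
Qed.

Lemma fourier_inversion f x : f x = \sum_S fourier f S * chi S x.
Proof.
have pow2_neq0 : (2 ^+ D : rat) != 0 by rewrite expf_neq0 // pnatr_eq0.
transitivity ((2 ^+ D)^-1 * \sum_y f y * \sum_S chi S y * chi S x).
  rewrite (bigD1 x) //= sum_chiM eqxx big1 ?addr0 => [|y /negbTE yx].
    by rewrite mulrCA mulVf ?mulr1.
  by rewrite sum_chiM yx mulr0.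
rewrite /fourier card_cube natrX mulr_sumr.
under [RHS]eq_bigr => S _ do rewrite !mulr_suml.
rewrite exchange_big /=; apply: eq_bigr => y _.
rewrite !mulr_sumr; apply: eq_bigr => S _.
by rewrite [RHS]mulrAC [RHS]mulrC -mulrA.
Qed.

Lemma FA_expansion (A : {set {set 'I_D}}) f :
  FA A f -> forall x, f x = \sum_(S in A) fourier f S * chi S x.
Proof.
move=> [_ f_spec] x; rewrite {1}fourier_inversion (bigID (mem A)) /=.
by rewrite [X in _ + X]big1 ?addr0 // => S /f_spec ->; rewrite mul0r.
Qed.

Lemma eluder_seq_FA_size_leq (A : {set {set 'I_D}}) s :
  eluder_seq (FA A) s -> (size s <= #|A|)%N.
Proof.
apply: (@eluder_seq_size_leq _ _ _ (@chi D)) => f1 f2 Ff1 Ff2.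
exists (fun S => fourier f1 S - fourier f2 S) => x.
rewrite (FA_expansion Ff1) (FA_expansion Ff2) -sumrB.
by apply: eq_bigr => S _; rewrite mulrBl.
Qed.

End FourierAnalysis.

Lemma card_subsets_leq (T : finType) (k : nat) :
  #|[set S : {set T} | (#|S| <= k)%N]| = (\sum_(i < k.+1) 'C(#|T|, i))%N.
Proof.
rewrite -finset.sum1dep_card (partition_big (fun S : {set T} => inord #|S| : 'I_k.+1) predT) //=.
apply: eq_bigr => i _; rewrite -card_draws -finset.sum1dep_card.
apply: eq_bigl => S; case: (leqP #|S| k) => [Sk | kS] /=.
  by rewrite -(inj_eq val_inj) /= inordK.
apply/esym/negbTE; apply: contraTN kS => /eqP ->.
by rewrite -leqNgt -ltnS ltn_ord.
Qed.

Lemma partial_binomial_le_exprD1n (R : realDomainType) (x : R) (D k : nat) :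
  0 <= x -> x <= 1 -> (k <= D)%N ->
  x ^+ k * (\sum_(i < k.+1) 'C(D, i))%:R <= (1 + x) ^+ D.
Proof.
move=> x_ge0 x_le1 kD; rewrite natr_sum mulr_sumr.
apply: (@le_trans _ _ (\sum_(i < k.+1) x ^+ i *+ 'C(D, i))).
  by apply: ler_sum => i _; rewrite mulr_natr lerMn2r ler_wiXn2l ?orbT // -ltnS.
rewrite addrC exprD1n (big_ord_widen D.+1 (fun i => x ^+ i *+ 'C(D, i))) // big_mkcond.
apply: ler_sum => i _; case: ifP => // _.
by rewrite mulrn_wge0 // exprn_ge0.
Qed.

Lemma sum_binomial_le_expR (R : realType) (D k : nat) : (0 < k <= D)%N ->
  ((\sum_(i < k.+1) 'C(D, i))%:R <= (expR (1 : R) * D%:R / k%:R) ^+ k :> R).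
Proof.
case/andP => k_gt0 kD.
have k_neq0 : (k%:R : R) != 0 by rewrite pnatr_eq0 -lt0n.
have D_gt0 : (0 < D)%N := leq_trans k_gt0 kD.
have D_neq0 : (D%:R : R) != 0 by rewrite pnatr_eq0 -lt0n.
pose x : R := k%:R / D%:R.
have x_gt0 : 0 < x by rewrite divr_gt0 ?ltr0n.
have x_le1 : x <= 1 by rewrite ler_pdivrMr ?ltr0n // mul1r ler_nat.
rewrite -(ler_pM2l (exprn_gt0 k x_gt0)) -exprMn.
have -> : x * (expR 1 * D%:R / k%:R) = expR 1 by rewrite /x mulrC mulrA divfK // mulfK.
apply: le_trans (partial_binomial_le_exprD1n (ltW x_gt0) x_le1 kD) _.
apply: le_trans (_ : expR x ^+ D <= _).
  by apply: lerXn2r; rewrite ?nnegrE ?expR_ge0 ?addr_ge0 ?ler01 ?(ltW x_gt0) // expR_ge1Dx.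
by rewrite -!expRM_natl /x mulrCA divff // mulr1.
Qed.

Theorem proposition3 (D : nat) (hD : (1 <= D)%N) (A : {set {set 'I_D}}) :
  (forall s : seq (cube D), eluder_seq (FA A) s -> (size s <= #|A|)%N) /\
  (forall (R : realType) (k : nat), (1 <= k <= D)%N ->
     (forall S, S \in A -> (#|S| <= k)%N) ->
     (#|A| <= \sum_(i < k.+1) 'C(D, i))%N /\
     ((\sum_(i < k.+1) 'C(D, i))%:R <= (expR (1 : R) * D%:R / k%:R) ^+ k :> R)).
Proof.
split=> [s|R k k_range A_small]; first exact: eluder_seq_FA_size_leq.
split; last exact: sum_binomial_le_expR.
apply: (@leq_trans #|[set S : {set 'I_D} | (#|S| <= k)%N]|).
  by apply/subset_leq_card/fintype.subsetP => S /A_small; rewrite inE.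
by rewrite card_subsets_leq card_ord.
Qed.
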